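(* Let $\Lambda=KQ/I$ be a finite dimensional string algebra over a field $K$ whose quiver $Q$ has a tree as underlying graph, and let $i\in Q_0$ be a vertex at which exactly one arrow starts. Then $P(i)\cong C(\iota)$, where $\iota:\operatorname{rad}P(i)\hookrightarrow P(i)$ is the inclusion.
   Context: $K$ is a field, $Q$ a finite quiver with vertex set $Q_0$ and arrows $Q_1$, paths written right to left. $\Lambda=KQ/I$ with $I$ either $0$ or an admissible ideal, and $\Lambda$ is a string algebra: (i) at each vertex at most two arrows start and at most two end; (ii) if $\alpha\neq\beta,\gamma$ are arrows with $e(\alpha)=e(\beta)=s(\gamma)$ then $\gamma\alpha\in I$ or $\gamma\beta\in I$; (iii) if $\alpha\neq\beta,\gamma$ are arrows with $s(\alpha)=s(\beta)=e(\gamma)$ then $\alpha\gamma\in I$ or $\beta\gamma\in I$; (iv) $I$ is generated by paths. $\operatorname{mod}\Lambda$ is the category of finitely generated left $\Lambda$-modules, $\tau$ the Auslander–Reiten translation, $P(i)$ the indecomposable projective module at $i$. For $f:B\to C$ write $B=B_1\oplus B_2$ with $B_1\subseteq\operatorname{Ker}f$ and $f|_{B_2}$ right minimal; $\operatorname{Ker}(f|_{B_2})$ is the intrinsic kernel of $f$. An indecomposable projective $P$ almost factors through $f:M\to N$ if there are $h:P\to N$ and $g:\operatorname{rad}P\to M$ with $h|_{\operatorname{rad}P}=fg$ and $\operatorname{Im}h\not\subseteq\operatorname{Im}f$. The minimal right determiner $C(f)$ is the direct sum of the modules $\tau^{-1}L$, $L$ running over the indecomposable direct summands of the intrinsic kernel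 of $f$, and of the indecomposable projective modules almost factoring through $f$, one from each isomorphism class. *)

(* Finite-dimensional modules over a monomial bound quiver
   algebra KQ/I, represented as quiver representations with matrices
   (row-vector convention: an element x of M_{s a} is sent to x *m mor M a). *)
From HB Require Import structures.
From mathcomp Require Import all_boot all_algebra.
Set Implicit Arguments. Unset Strict Implicit. Unset Printing Implicit Defensive.
Import GRing.Theory.
Local Open Scope ring_scope.

Record quiver := Quiver {
  vert : finType; arr : finType;
  src : arr -> vert; tgt : arr -> vert }.

Section Quiver.
Variable Q : quiver.
Local Notation V := (vert Q).
Local Notation A := (arr Q).

(* p = [:: a1; ...; an] is a path traversing a1 first, from u to w
   (in the paper's right-to-left notation this is the path an ... a1). *)
Fixpoint is_path (u w : V) (p : seq A) : bool :=
  match p with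
  | [::] => u == w
  | a :: p' => (src a == u) && is_path (tgt a) w p'
  end.

(* The ideal I is generated by the paths in [rels]; a path lies in I iff it
   contains a generating path as a contiguous subpath. *)
Definition inI (rels : seq (seq A)) (p : seq A) : bool :=
  has (fun r => infix r p) rels.

(* rels generates an ideal I that is 0 or admissible: generators are paths of
   length >= 2 (finite dimensionality is automatic for trees). *)
Definition valid_rels (rels : seq (seq A)) : Prop :=
  forall r, r \in rels -> (1 < size r)%N /\ exists u w, is_path u w r.

(* Conditions (i)-(iii) of a string algebra; (iv) holds by construction. *)
Definition string_alg (rels : seq (seq A)) : Prop :=
  [/\ (forall v : V, #|[set a : A | src a == v]| <= 2)%N,
      (forall v : V, #|[set a : A | tgt a == v]| <= 2)%N,
      (forall al be ga : A, al != be -> tgt al = tgt be -> tgt be = src ga ->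
          inI rels [:: al; ga] || inI rels [:: be; ga])
    & (forall al be ga : A, al != be -> src al = src be -> src be = tgt ga ->
          inI rels [:: ga; al] || inI rels [:: ga; be])].

Definition adj : rel V := fun u w =>
  [exists a : A, ((src a == u) && (tgt a == w)) || ((src a == w) && (tgt a == u))].

Definition is_tree : Prop :=
  (forall u w : V, connect adj u w) /\ #|V| = #|A|.+1.

Section Rep.
Variable K : fieldType.
Variable rels : seq (seq A).

Record rep := Rep {
  dim : V -> nat;
  mor : forall a : A, 'M[K]_(dim (src a), dim (tgt a)) }.

Definition cast_id (M : rep) (u w : V) : 'M[K]_(dim M u, dim M w) :=
  match u =P w with
  | ReflectT e => castmx (erefl, congr1 (dim M) e) (1%:M : 'M[K]_(dim M u))
  | ReflectF _ => 0
  end.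

Definition mor' (M : rep) (u w : V) (a : A) : 'M[K]_(dim M u, dim M w) :=
  match src a =P u, tgt a =P w with
  | ReflectT e1, ReflectT e2 => castmx (congr1 (dim M) e1, congr1 (dim M) e2) (mor M a)
  | _, _ => 0
  end.

Fixpoint pathmx (M : rep) (u w : V) (p : seq A) : 'M[K]_(dim M u, dim M w) :=
  match p with
  | [::] => cast_id M u w
  | a :: p' => mor' M u (tgt a) a *m pathmx M (tgt a) w p'
  end.

Definition isMod (M : rep) : Prop :=
  forall r u w, r \in rels -> is_path u w r -> pathmx M u w r = 0.

Definition hom (M N : rep) := forall v : V, 'M[K]_(dim M v, dim N v).
Definition is_hom (M N : rep) (f : hom M N) : Prop :=
  forall a : A, mor M a *m f (tgt a) = f (src a) *m mor N a.
Definition hcomp (M N P : rep) (f : hom M N) (g : hom N P) : hom M P :=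
  fun v => f v *m g v.

Definition zero_rep : rep := @Rep (fun _ => 0%N) (fun a => 0).
Definition is_zero (M : rep) : Prop := forall v, dim M v = 0%N.
Definition dsum (M N : rep) : rep :=
  @Rep (fun v => dim M v + dim N v)%N (fun a => block_mx (mor M a) 0 0 (mor N a)).
Definition bigsum (Ms : seq rep) : rep := foldr dsum zero_rep Ms.

Definition iso_map (M N : rep) (f : hom M N) : Prop :=
  is_hom f /\ exists g : hom N M,
    [/\ is_hom g, forall v, f v *m g v = 1%:M & forall v, g v *m f v = 1%:M].
Definition iso (M N : rep) : Prop := exists f : hom M N, iso_map f.

Definition indec (M : rep) : Prop :=
  [/\ isMod M, ~ is_zero M &
      forall X Y, isMod X -> isMod Y -> iso M (dsum X Y) -> is_zero X \/ is_zero Y].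

Definition mono (M N : rep) (f : hom M N) : Prop := forall v, row_free (f v).
Definition epi (M N : rep) (f : hom M N) : Prop := forall v, row_full (f v).
Definition split_mono (M N : rep) (f : hom M N) : Prop :=
  exists r : hom N M, is_hom r /\ forall v, f v *m r v = 1%:M.
Definition split_epi (M N : rep) (f : hom M N) : Prop :=
  exists s : hom N M, is_hom s /\ forall v, s v *m f v = 1%:M.

Definition injective_mod (M : rep) : Prop :=
  isMod M /\ forall X (f : hom M X), isMod X -> is_hom f -> mono f -> split_mono f.

Definition almost_split (L E N : rep) (u : hom L E) (p : hom E N) : Prop :=
  [/\ [/\ isMod L, isMod E, isMod N, is_hom u & is_hom p],
      [/\ mono u, epi p & forall v, (u v == kermx (p v))%MS],
      [/\ indec L, indec N & ~ split_mono u],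
      (forall X (h : hom L X), isMod X -> is_hom h -> ~ split_mono h ->
          exists k : hom E X, is_hom k /\ forall v, u v *m k v = h v)
    & (forall X (h : hom X N), isMod X -> is_hom h -> ~ split_epi h ->
          exists k : hom X E, is_hom k /\ forall v, k v *m p v = h v)].

Definition tauinv (L N : rep) : Prop :=
  isMod N /\
  ((injective_mod L /\ is_zero N) \/
   exists E (u : hom L E) (p : hom E N), almost_split u p).

Definition right_minimal (B C : rep) (f : hom B C) : Prop :=
  forall phi : hom B B, is_hom phi -> (forall v, phi v *m f v = f v) ->
    forall v, phi v \in unitmx.

Definition inl_h (B1 B2 : rep) : hom B1 (dsum B1 B2) := fun v => row_mx 1%:M 0.
Definition inr_h (B1 B2 : rep) : hom B2 (dsum B1 B2) := fun v => row_mx 0 1%:M.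

Definition intr_ker (B C : rep) (f : hom B C) (Kk : rep) : Prop :=
  exists B1 B2 (th : hom (dsum B1 B2) B),
    [/\ [/\ isMod B1, isMod B2 & iso_map th],
        (forall v, hcomp (@inl_h B1 B2) (hcomp th f) v = 0),
        right_minimal (hcomp (@inr_h B1 B2) (hcomp th f)) &
        isMod Kk /\ exists k : hom Kk B2,
          [/\ is_hom k, mono k &
              forall v, (k v == kermx (hcomp (@inr_h B1 B2) (hcomp th f) v))%MS]].

(* indecomposable projectives: P(j) = Lambda e_j with basis the paths starting
   at j not in I (tree quivers have no paths of length > #|A|), and its
   radical spanned by the nontrivial such paths *)
Fixpoint allseqs (n : nat) : seq (seq A) :=
  match n with
  | 0 => [:: [::]]
  | n'.+1 => [::] :: [seq a :: p | a <- enum A, p <- allseqs n']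
  end.

Definition basisP (rad : bool) (j v : V) : seq (seq A) :=
  [seq p <- allseqs #|A| | [&& is_path j v p, ~~ inI rels p & (~~ rad) || (p != [::])]].

Definition prep (rad : bool) (j : V) : rep :=
  @Rep (fun v => size (basisP rad j v))
    (fun a => \matrix_(x, y)
       ((nth [::] (basisP rad j (tgt a)) y == rcons (nth [::] (basisP rad j (src a)) x) a)%:R)).

Definition Pj (j : V) : rep := prep false j.
Definition radP (j : V) : rep := prep true j.
Definition rad_incl (j : V) : hom (radP j) (Pj j) := fun v =>
  \matrix_(x, y) ((nth [::] (basisP true j v) x == nth [::] (basisP false j v) y)%:R).

Definition almost_factors (j : V) (B C : rep) (f : hom B C) : Prop :=
  exists (h : hom (Pj j) C) (g : hom (radP j) B),
    [/\ is_hom h, is_hom g, (forall v, rad_incl j v *m h v = g v *m f v)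
      & ~ (forall v, (h v <= f v)%MS)].

Definition all_indec (Ls : seq rep) : Prop :=
  forall k, (k < size Ls)%N -> indec (nth zero_rep Ls k).

Definition isC (B C : rep) (f : hom B C) (M : rep) : Prop :=
  exists Kk, intr_ker f Kk /\
  exists (Ls Ns : seq rep) (J : seq V),
    [/\ [/\ all_indec Ls, size Ns = size Ls &
          forall k, (k < size Ls)%N -> tauinv (nth zero_rep Ls k) (nth zero_rep Ns k)],
        iso Kk (bigsum Ls),
        uniq J,
        (forall j, j \in J <-> almost_factors j f)
      & iso M (dsum (bigsum Ns) (bigsum [seq Pj j | j <- J]))].

End Rep.
End Quiver.

(* The radical inclusion [iota : rad P(i) -> P(i)] is a monomorphism, hence right
   minimal, so its intrinsic kernel is zero and [C(iota)] is the sum of the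
   indecomposable projectives almost factoring through [iota].  [P(i)] does, via the
   identity maps, because the trivial path [e_i] is not in the radical.  For [j <> i]
   no [P(j)] does: a basis path of [P(j)] ending at [i] is nontrivial, so it ends with
   an arrow, and arrows never reach the [e_i]-coordinate of [P(i)]; hence every
   morphism [P(j) -> P(i)] already lands in [rad P(i)]. *)
From HB Require Import structures.
From mathcomp Require Import all_boot all_algebra.
Set Implicit Arguments. Unset Strict Implicit. Unset Printing Implicit Defensive.
Import GRing.Theory.
Local Open Scope ring_scope.

Section Representations.
Variables (Q : quiver) (K : fieldType) (rels : seq (seq (arr Q))).
Local Notation A := (arr Q).
Local Notation V := (vert Q).
Local Notation rep := (rep Q K).

Lemma flatmx_eq m (X Y : 'M[K]_(0, m)) : X = Y.
Proof. by rewrite (flatmx0 X) (flatmx0 Y). Qed.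

Lemma isMod_zero : isMod rels (zero_rep Q K).
Proof. by move=> r u w _ _; apply: flatmx_eq. Qed.

Lemma iso_refl (M : rep) : iso M M.
Proof.
exists (fun v => 1%:M); split; first by move=> a; rewrite mulmx1 mul1mx.
by exists (fun v => 1%:M); split => [a|v|v]; rewrite ?mulmx1 ?mul1mx.
Qed.

Lemma iso_sym (M N : rep) : iso M N -> iso N M.
Proof. by case=> f [Hf [g [Hg Hfg Hgf]]]; exists g; split=> //; exists f. Qed.

Lemma iso_trans (M N P : rep) : iso M N -> iso N P -> iso M P.
Proof.
case=> f [Hf [g [Hg Hfg Hgf]]] [f' [Hf' [g' [Hg' Hfg' Hgf']]]].
exists (fun v => f v *m f' v); split.
  by move=> a; rewrite mulmxA Hf -mulmxA Hf' mulmxA.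
exists (fun v => g' v *m g v); split.
- by move=> a; rewrite mulmxA Hg' -mulmxA Hg mulmxA.
- by move=> v; rewrite mulmxA -(mulmxA (f v)) Hfg' mulmx1 Hfg.
- by move=> v; rewrite mulmxA -(mulmxA (g' v)) Hgf mulmx1 Hgf'.
Qed.

Lemma iso_dsum0r (M : rep) : iso M (dsum M (zero_rep Q K)).
Proof.
exists (fun v => row_mx 1%:M (0 : 'M_(dim M v, 0))); split.
  by move=> a /=; rewrite mul_row_block mul_mx_row ?mulmx1 ?mul1mx ?mulmx0 ?mul0mx ?addr0.
exists (fun v => col_mx 1%:M (0 : 'M_(0, dim M v))); split.
- by move=> a /=; rewrite mul_block_col mul_col_mx ?mulmx1 ?mul1mx ?mulmx0 ?mul0mx ?addr0.
- by move=> v; rewrite mul_row_col mulmx1 mulmx0 addr0.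
- move=> v; rewrite mul_col_row (scalar_mx_block (dim M v) 0).
  by rewrite ?mulmx1 ?mulmx0 ?mul0mx ?mul1mx; congr block_mx; apply: flatmx_eq.
Qed.

Definition dsum0l_h (M : rep) : hom (dsum (zero_rep Q K) M) M :=
  fun v => col_mx 0 1%:M.

Lemma dsum0l_iso_map (M : rep) : iso_map (dsum0l_h M).
Proof.
split.
  by move=> a /=; rewrite mul_block_col mul_col_mx ?mulmx1 ?mul1mx ?mulmx0 ?mul0mx ?add0r.
exists (fun v => row_mx (0 : 'M_(dim M v, 0)) 1%:M); split.
- by move=> a /=; rewrite mul_row_block mul_mx_row ?mulmx1 ?mul1mx ?mulmx0 ?mul0mx ?add0r.
- move=> v; rewrite mul_col_row [RHS](scalar_mx_block 0 (dim M v)).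
  by rewrite ?mulmx1 ?mulmx0 ?mul0mx ?mul1mx; congr block_mx; apply: flatmx_eq.
- by move=> v; rewrite mul_row_col mulmx1 mulmx0 add0r.
Qed.

Lemma iso_dsum0l (M : rep) : iso M (dsum (zero_rep Q K) M).
Proof. by apply: iso_sym; exists (dsum0l_h M); apply: dsum0l_iso_map. Qed.

Lemma mono_right_minimal (B C : rep) (f : hom B C) : mono f -> right_minimal f.
Proof.
move=> f_mono phi _ phi_f v.
suff -> : phi v = 1%:M by apply: unitmx1.
by apply: (row_free_inj (f_mono v)); rewrite /= phi_f mul1mx.
Qed.

Lemma intr_ker_mono (B C : rep) (f : hom B C) :
  isMod rels B -> mono f -> intr_ker rels f (zero_rep Q K).
Proof.
move=> B_mod f_mono.
have inr_f v : hcomp (@inr_h Q K (zero_rep Q K) B) (hcomp (dsum0l_h B) f) v = f v.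
  by rewrite /hcomp /inr_h mulmxA mul_row_col mulmx0 add0r mulmx1 mul1mx.
exists (zero_rep Q K), B, (dsum0l_h B); split.
- by split; [apply: isMod_zero | | apply: dsum0l_iso_map].
- by move=> v; apply: flatmx_eq.
- by apply: mono_right_minimal => v; rewrite inr_f.
split; first exact: isMod_zero.
exists (fun v => 0 : 'M[K]_(0, dim B v)); split.
- by move=> a; apply: flatmx_eq.
- by move=> v; rewrite /row_free mxrank0.
- move=> v; rewrite inr_f.
  suff -> : kermx (f v) = 0 by rewrite !sub0mx.
  by apply/eqP; rewrite kermx_eq0.
Qed.

Lemma isC_mono (B C M : rep) (f : hom B C) (J : seq V) :
  isMod rels B -> mono f -> uniq J ->
  (forall j, j \in J <-> almost_factors rels j f) ->
  iso M (bigsum [seq Pj K rels j | j <- J]) -> isC rels f M.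
Proof.
move=> B_mod f_mono J_uniq J_af M_iso.
exists (zero_rep Q K); split; first exact: intr_ker_mono.
exists [::], [::], J; split=> //.
- exact: iso_refl.
- exact: iso_trans M_iso (iso_dsum0l _).
Qed.

Lemma mem_allseqs n (p : seq A) : (p \in allseqs Q n) = (size p <= n)%N.
Proof.
elim: n p => [|n IH] [|a p] //=; rewrite inE //= ltnS -IH.
apply/allpairsP/idP => [[[b q]] /= [_ Hq [_ ->]] // | Hp].
by exists (a, p); rewrite mem_enum.
Qed.

Lemma uniq_allseqs n : uniq (allseqs Q n).
Proof.
elim: n => [|n IH] //=; apply/andP; split.
  by apply/allpairsP => [[[b q]]] /= [_ _].
by apply: allpairs_uniq => [||[b q] [c r] _ _ /= [-> ->]] //; apply: enum_uniq.
Qed.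

Local Notation basis := (basisP rels).

Lemma mem_basisP rad j v p :
  (p \in basis rad j v) =
  [&& (size p <= #|A|)%N, is_path j v p, ~~ inI rels p & ~~ rad || (p != [::])].
Proof. by rewrite mem_filter mem_allseqs; case: (size p <= _)%N; rewrite ?andbT ?andbF. Qed.

Lemma uniq_basisP rad j v : uniq (basis rad j v).
Proof. exact/filter_uniq/uniq_allseqs. Qed.

Lemma is_path_rcons u w (p : seq A) a :
  is_path u w (rcons p a) = is_path u (src a) p && (tgt a == w).
Proof.
elim: p u => [|b p IH] u /=; first by rewrite eq_sym; case: eqP.
by rewrite IH andbA.
Qed.

Lemma is_path_catl u w (p q : seq A) :
  is_path u w (p ++ q) -> exists x, is_path u x p.
Proof.
elim: p u => [|b p IH] u /=; first by exists u.
by case/andP=> -> /IH [x Hx]; exists x.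
Qed.

Lemma inI_infix p s : inI rels p -> infix p s -> inI rels s.
Proof. by case/hasP=> r Hr Hrp Hps; apply/hasP; exists r => //; apply: infix_trans Hps. Qed.

Lemma basisP_prefix rad j w (p : seq A) a t :
  rcons p a ++ t \in basis rad j w -> rcons p a \in basis rad j (tgt a).
Proof.
rewrite !mem_basisP => /and4P [Hs Hp HI _].
apply/and4P; split; last by rewrite -size_eq0 size_rcons orbT.
- by apply: leq_trans Hs; rewrite size_cat leq_addr.
- by case/is_path_catl: Hp => x; rewrite !is_path_rcons eqxx => /andP [-> _].
- by apply: contra HI => /inI_infix; apply; apply: prefix_infix.
Qed.

Lemma basisP_belast j w (p : seq A) a :
  rcons p a \in basis false j w -> p \in basis false j (src a).
Proof.
rewrite !mem_basisP is_path_rcons /= !andbT => /and3P [Hs /andP [-> _] HI].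
apply/andP; split; first by apply: leq_trans Hs; rewrite size_rcons.
by apply: contra HI => /inI_infix; apply; apply: infix_rcons.
Qed.

Lemma nil_notin_inI : valid_rels rels -> ~~ inI rels [::].
Proof. by move=> Hv; apply/hasPn => r /Hv []; case: r. Qed.

(* The coordinate row of the path [q] in the basis [s]; it is zero when [q \notin s]. *)
Definition indrow (s : seq (seq A)) (q : seq A) : 'rV[K]_(size s) :=
  \row_y ((nth [::] s y == q)%:R).

Lemma indrow_nth (s : seq (seq A)) (z : 'I_(size s)) :
  uniq s -> indrow s (nth [::] s z) = delta_mx 0 z.
Proof. by move=> s_uniq; apply/rowP => y; rewrite !mxE nth_uniq. Qed.

Lemma indrow_mem (s : seq (seq A)) q : uniq s -> q \in s ->
  exists2 z : 'I_(size s), indrow s q = delta_mx 0 z & nth [::] s z = q.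
Proof.
move=> s_uniq q_s; have q_lt : (index q s < size s)%N by rewrite index_mem.
by exists (Ordinal q_lt); rewrite -?indrow_nth //= nth_index.
Qed.

Lemma indrow_notin (s : seq (seq A)) q : q \notin s -> indrow s q = 0.
Proof.
move=> q_s; apply/rowP => y; rewrite !mxE; case: eqP => // e.
by have := mem_nth [::] (ltn_ord y); rewrite e (negbTE q_s).
Qed.

Lemma mor'E (M : rep) a : mor' M (src a) (tgt a) a = mor M a.
Proof.
rewrite /mor'; case: (src a =P src a) => [e1|] //.
by case: (tgt a =P tgt a) => [e2|] //; rewrite castmx_id.
Qed.

Lemma cast_id_refl (M : rep) u : cast_id M u u = 1%:M.
Proof. by rewrite /cast_id; case: (u =P u) => [e|] //; rewrite castmx_id. Qed.

Lemma row_mor_prep rad j a (x : 'I_(size (basis rad j (src a)))) :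
  row x (mor (prep K rels rad j) a) =
  indrow (basis rad j (tgt a)) (rcons (nth [::] (basis rad j (src a)) x) a).
Proof. by apply/rowP => y; rewrite !mxE. Qed.

Lemma row_pathmx_prep rad j p u w (x : 'I_(size (basis rad j u))) :
  is_path u w p ->
  row x (pathmx (prep K rels rad j) u w p) =
  indrow (basis rad j w) (nth [::] (basis rad j u) x ++ p).
Proof.
elim: p u x => [|a p IH] u x /=.
  by move/eqP=> <-; rewrite cast_id_refl cats0 row1 indrow_nth ?uniq_basisP.
case/andP=> /eqP e Hp; subst u; rewrite mor'E row_mul row_mor_prep -cat_rcons.
have [xa_in | xa_out] :=
  boolP (rcons (nth [::] (basis rad j (src a)) x) a \in basis rad j (tgt a)).
  have [z -> <-] := indrow_mem (uniq_basisP _ _ _) xa_in.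
  by rewrite -rowE IH.
rewrite indrow_notin // mul0mx indrow_notin //.
by apply: contra xa_out; apply: basisP_prefix.
Qed.

Lemma isMod_prep rad j : isMod rels (prep K rels rad j).
Proof.
move=> r u w r_rels Hr; apply/row_matrixP => x.
rewrite row_pathmx_prep // row0 indrow_notin //; apply/negP.
rewrite mem_basisP => /and4P [_ _ /negP []].
by apply/hasP; exists r => //; apply: suffix_infix.
Qed.

Lemma row_rad_incl i v (x : 'I_(size (basis true i v))) :
  row x (rad_incl K rels i v) = indrow (basis false i v) (nth [::] (basis true i v) x).
Proof. by apply/rowP => y; rewrite !mxE eq_sym. Qed.

Lemma rad_incl_row_free i v : row_free (rad_incl K rels i v).
Proof.
apply/row_freeP; exists (\matrix_(y, z)
  ((nth [::] (basis false i v) y == nth [::] (basis true i v) z)%:R)).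
apply/row_matrixP => x; rewrite row_mul row_rad_incl row1.
have x_in : nth [::] (basis true i v) x \in basis false i v.
  by move: (mem_nth [::] (ltn_ord x)); rewrite !mem_basisP => /and4P [-> -> -> _].
have [z -> z_x] := indrow_mem (uniq_basisP _ _ _) x_in.
by rewrite -rowE; apply/rowP => y; rewrite !mxE z_x nth_uniq ?uniq_basisP // eq_sym.
Qed.

Lemma sub_rad_incl i v (s : 'rV[K]_(size (basis false i v))) :
  (forall y : 'I_(size (basis false i v)),
     nth [::] (basis false i v) y = [::] -> s 0 y = 0) ->
  (s <= rad_incl K rels i v)%MS.
Proof.
move=> s_nil; rewrite (row_sum_delta s); apply: summx_sub => y _.
have [y_nil | y_nil] := eqVneq (nth [::] (basis false i v) y) [::].
  by rewrite s_nil // scale0r sub0mx.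
apply: scalemx_sub; rewrite -indrow_nth ?uniq_basisP //.
have y_in : nth [::] (basis false i v) y \in basis true i v.
  by move: (mem_nth [::] (ltn_ord y)); rewrite !mem_basisP y_nil => /and4P [-> -> -> _].
have [z _ <-] := indrow_mem (uniq_basisP _ _ _) y_in.
by rewrite -row_rad_incl row_sub.
Qed.

Lemma mor_prep_nil rad j a (s : 'rV[K]_(size (basis rad j (src a))))
    (y : 'I_(size (basis rad j (tgt a)))) :
  nth [::] (basis rad j (tgt a)) y = [::] -> (s *m mor (prep K rels rad j) a) 0 y = 0.
Proof.
move=> y_nil; rewrite !mxE; apply: big1 => x _.
by rewrite !mxE y_nil eq_sym -size_eq0 size_rcons mulr0.
Qed.

Lemma hom_Pj_sub_rad_incl i j (h : hom (Pj K rels j) (Pj K rels i)) v :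
  j != i -> is_hom h -> (h v <= rad_incl K rels i v)%MS.
Proof.
move=> ji h_hom; apply/row_subP => x; apply: sub_rad_incl => y y_nil.
have /eqP iv : is_path i v [::].
  by move: (mem_nth [::] (ltn_ord y)); rewrite y_nil mem_basisP => /and3P [].
subst v; have x_in := mem_nth [::] (ltn_ord x).
have [p [a x_pa]] : exists p a, nth [::] (basis false j i) x = rcons p a.
  case/lastP: (nth [::] _ _) x_in => [|p a]; last by exists p, a.
  by rewrite mem_basisP /= (negbTE ji).
have /eqP ai : tgt a == i.
  by move: x_in; rewrite x_pa mem_basisP is_path_rcons => /and3P [_ /andP []].
subst i; move: x_in; rewrite x_pa => /basisP_belast p_in.
have [z z_p p_z] := indrow_mem (uniq_basisP _ _ _) p_in.
have arrow_x : row z (mor (Pj K rels j) a) = delta_mx 0 x.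
  by rewrite row_mor_prep p_z -x_pa indrow_nth ?uniq_basisP.
by rewrite rowE -arrow_x -row_mul h_hom row_mul mor_prep_nil.
Qed.

Lemma size_radP_lt i :
  valid_rels rels -> (size (basis true i i) < size (basis false i i))%N.
Proof.
move=> rels_valid; have -> : basis true i i = [seq p <- basis false i i | p != [::]].
  rewrite /basisP -filter_predI; apply: eq_filter => p /=.
  by case: (p != [::]); rewrite ?andbT ?andbF.
rewrite size_filter -(count_predC (fun p : seq A => p != [::])) -addn1 leq_add2l.
rewrite -has_count; apply/hasP; exists [::] => //.
by rewrite mem_basisP /= eqxx nil_notin_inI.
Qed.

Lemma Pi_almost_factors_rad_incl i :
  valid_rels rels -> almost_factors rels i (rad_incl K rels i).
Proof.
move=> rels_valid; exists (fun v => 1%:M), (fun v => 1%:M).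
split=> [a|a|v|incl]; rewrite ?mulmx1 ?mul1mx //.
have := incl i; rewrite sub1mx => /eqP full.
by have := rank_leq_row (rad_incl K rels i i); rewrite full leqNgt size_radP_lt.
Qed.

Lemma Pj_not_almost_factors_rad_incl i j :
  j != i -> ~ almost_factors rels j (rad_incl K rels i).
Proof. by move=> ji [h [g [h_hom _ _ []]]] v; apply: hom_Pj_sub_rad_incl. Qed.

End Representations.

Theorem lemma3p6 (K : fieldType) (Q : quiver) (rels : seq (seq (arr Q)))
    (i : vert Q) :
  valid_rels rels ->
  string_alg rels ->
  is_tree Q ->
  #|[set a : arr Q | src a == i]| = 1%N ->
  @isC Q K rels _ _ (@rad_incl Q K rels i) (@Pj Q K rels i).
Proof.
move=> rels_valid _ _ _.
apply: (isC_mono (J := [:: i])) => //.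
- exact: isMod_prep.
- exact: rad_incl_row_free.
- move=> j; rewrite inE; split=> [/eqP -> | af_j]; first exact: Pi_almost_factors_rad_incl.
  by apply/eqP; apply: contraPeq af_j; apply: Pj_not_almost_factors_rad_incl.
- exact: iso_dsum0r.
Qed.
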